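(* Let $H\in(1/2,1)$ and let $B^H$ be a fractional Brownian motion on $[0,1]$ with Hurst index $H$. Fix $\alpha\in(1/2,H)$, $\delta\in(0,H-\alpha)$ and $\rho>0$, and define $$N=\sup\Bigl\{n\ge1:\ \|B^H_n-B^H_{n-1}\|_\infty\ge \rho\cdot 2^{-(H-\delta)n}\Bigr\}.$$ Then for every $n>N$, $$\|B^H-B^H_n\|_\alpha\le \frac{\rho\, 2^{2-\alpha}\cdot 2^{-(H-\alpha-\delta)(n+1)}}{1-2^{-(H-\alpha-\delta)}}.$$
   Context: A fractional Brownian motion with Hurst index $H$ is a centered Gaussian process with $B^H(0)=0$ and covariance $\mathbb{E}[B^H(s)B^H(t)]=\tfrac12(|s|^{2H}+|t|^{2H}-|s-t|^{2H})$, taken with continuous sample paths. For $n\ge0$, $B^H_n$ is the function on $[0,1]$ obtained by linear interpolation of the values of $B^H$ at the dyadic points $i/2^n$, $i=0,\dots,2^n$; $B^H_{-1}\equiv0$. $\|u\|_\infty=\sup_{t\in[0,1]}|u(t)|$ and $\|u\|_\alpha=\sup_{0\le s<t\le1}|u(s)-u(t)|/|s-t|^\alpha$. *)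

From HB Require Import structures.
From mathcomp Require Import all_boot all_order all_algebra.
From mathcomp Require Import all_classical all_reals all_analysis.
Set Implicit Arguments. Unset Strict Implicit. Unset Printing Implicit Defensive.
Import Order.TTheory GRing.Theory Num.Theory.
Import numFieldNormedType.Exports.
Local Open Scope classical_set_scope.
Local Open Scope ring_scope.

Section defs.
Variable R : realType.

Definition fbm_cov (H s t : R) : R :=
  (`|s| `^ (2 * H) + `|t| `^ (2 * H) - `|s - t| `^ (2 * H)) / 2.

(* B is a fractional Brownian motion with Hurst index H on [0,1] (index set
   [0,1]) defined on the probability space (T, P): each B t is a random
   variable, B 0 = 0, every sample path is continuous on [0,1], and B is a
   centered Gaussian process with covariance fbm_cov H, i.e. every finite
   linear combination sum_i c_i B(t_i) has law N(0, sum_{i,j} c_i c_j K(t_i,t_j))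
   (the degenerate normal law N(0,0) being the Dirac mass at 0). *)
Definition is_fBM (d : measure_display) (T : measurableType d)
    (P : probability T R) (H : R) (B : R -> T -> R) : Prop :=
  [/\ (forall t, 0 <= t <= 1 -> measurable_fun setT (B t)),
      (forall w, B 0 w = 0),
      (forall w, {within `[0, 1], continuous (fun t => B t w)}) &
      (forall (k : nat) (ts : 'I_k -> R) (c : 'I_k -> R),
        (forall i, 0 <= ts i <= 1) ->
        let X := fun w => \sum_(i < k) c i * B (ts i) w in
        let v := \sum_(i < k) \sum_(j < k) c i * c j * fbm_cov H (ts i) (ts j) in
        forall A : set R, measurable A ->
          P (X @^-1` A) =
          (if v == 0 then (\1_A (0 : R))%:E
           else normal_prob 0 (Num.sqrt v) A))].

(* B_n: linear interpolation of f at the dyadic points i/2^n of [0,1]. *)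
Definition dyadic_interp (f : R -> R) (n : nat) (t : R) : R :=
  let k : R := (Num.floor (t * 2 ^+ n))%:~R in
  f (k / 2 ^+ n) + (t * 2 ^+ n - k) * (f ((k + 1) / 2 ^+ n) - f (k / 2 ^+ n)).

Definition supnorm (u : R -> R) : \bar R :=
  ereal_sup [set x | exists t, 0 <= t <= 1 /\ x = (`|u t|)%:E].

Definition holder_norm (alpha : R) (u : R -> R) : \bar R :=
  ereal_sup [set x | exists s t, [/\ 0 <= s, s < t, t <= 1 &
     x = (`|u s - u t| / `|s - t| `^ alpha)%:E]].

End defs.

From HB Require Import structures.
From mathcomp Require Import all_boot all_order all_algebra.
From mathcomp Require Import all_classical all_reals all_analysis.
From mathcomp Require Import ring lra zify.
Set Implicit Arguments. Unset Strict Implicit. Unset Printing Implicit Defensive.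
Import Order.TTheory GRing.Theory Num.Theory.
Import numFieldNormedType.Exports.
Local Open Scope classical_set_scope.
Local Open Scope ring_scope.

(* The increment
   g_m = B_m - B_{m-1} is affine on every dyadic cell of length 2^-m, so a
   bound |g_m| <= c on [0,1] makes it Lipschitz with constant 2 c 2^m across
   two adjacent cells; together with the trivial bound 2c this gives
   |g_m s - g_m t| <= 2 c (2^m |t - s|)^alpha.  For m > N the bound
   c = rho 2^-(H-delta)m turns this into the Hoelder constant 2 rho q^m with
   q = 2^-(H-alpha-delta) < 1.  Since B_M -> B pointwise, B - B_n is the sum
   of the g_m for m > n, and the Hoelder constants sum to
   2 rho q^(n+1) / (1 - q), which is at most the stated bound as 2 <= 2^(2-alpha). *)

Section dyadic_grid.
Variable R : realType.
Implicit Types (f g : R -> R) (N : R) (k : int).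

(* [g] is affine on every cell [k/N, (k+1)/N], written without division *)
Definition grid_affine N g := forall k, exists a b : R,
  forall t, k%:~R <= t * N <= k%:~R + 1 -> g t = a + b * t.

Lemma grid_affineB N f g :
  grid_affine N f -> grid_affine N g -> grid_affine N (f \- g).
Proof.
move=> hf hg k; have [a [b fk]] := hf k; have [a' [b' gk]] := hg k.
by exists (a - a'), (b - b') => t kt /=; rewrite fk ?gk //; ring.
Qed.

Lemma grid_affine_refine N g : grid_affine N g -> grid_affine (2 * N) g.
Proof.
move=> hg k; pose j := (k %/ 2)%Z.
have [a [b gj]] := hg j; exists a, b => t /andP[kt tk]; apply: gj.
have jk : (2 * j <= k)%R by lia.
have kj : (k + 1 <= 2 * j + 2)%R by lia.
rewrite -(ler_int R) intrM in jk; rewrite -(ler_int R) !intrD intrM in kj.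
rewrite mulrCA in kt tk; apply/andP; split; lra.
Qed.

Lemma dyadic_interp_cell f n k t : k%:~R <= t * 2 ^+ n <= k%:~R + 1 ->
  dyadic_interp f n t = f (k%:~R / 2 ^+ n) + (t * 2 ^+ n - k%:~R) *
     (f ((k%:~R + 1) / 2 ^+ n) - f (k%:~R / 2 ^+ n)).
Proof.
move=> /andP[kt tk]; rewrite /dyadic_interp.
have [tk'|kt'] := ltrP (t * 2 ^+ n) (k%:~R + 1).
  by rewrite (floor_def (m := k)) // kt intrD.
(* on the right endpoint the floor is k + 1, but both formulas give f t *)
have et : t * 2 ^+ n = k%:~R + 1 by apply/le_anti; rewrite tk kt'.
rewrite (floor_def (m := k + 1)); last by rewrite !intrD et lexx /= ltrDl.
have -> : t = (k%:~R + 1) / 2 ^+ n by rewrite -et mulfK // expf_neq0.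
by rewrite divfK ?expf_neq0 // intrD; ring.
Qed.

Lemma grid_affine_dyadic_interp f n : grid_affine (2 ^+ n) (dyadic_interp f n).
Proof.
move=> k; set D := f ((k%:~R + 1) / 2 ^+ n) - f (k%:~R / 2 ^+ n).
exists (f (k%:~R / 2 ^+ n) - k%:~R * D), (2 ^+ n * D) => t kt.
by rewrite (dyadic_interp_cell f kt) -/D; ring.
Qed.

Lemma grid_affine_dyadic_increment f m :
  grid_affine (2 ^+ m.+1) (dyadic_interp f m.+1 \- dyadic_interp f m).
Proof.
apply: grid_affineB; first exact: grid_affine_dyadic_interp.
by rewrite exprS; apply/grid_affine_refine/grid_affine_dyadic_interp.
Qed.

End dyadic_grid.

Section grid_holder.
Variable R : realType.
Implicit Types (g : R -> R) (N : nat) (k : int) (c s t u v : R).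

Lemma intr_addr1_le_natr k N (x : R) : k%:~R < x -> x <= N%:R -> k%:~R + 1 <= N%:R :> R.
Proof.
move=> kx xN; have kN : (k < N%:Z)%R by rewrite -(ltr_int R); exact: lt_le_trans xN.
have : (k + 1 <= N%:Z)%R by lia.
by rewrite -(ler_int R) intrD1.
Qed.

Lemma grid_cell_of N (x : R) : (0 < N)%N -> 0 <= x <= 1 ->
  exists k, [/\ (0 <= k)%R, k%:~R + 1 <= N%:R :> R & k%:~R <= x * N%:R <= k%:~R + 1].
Proof.
move=> N0 /andP[x0 x1]; have [xlt|xge] := ltrP x 1.
  exists (Num.floor (x * N%:R)); have /andP[kx xk] := floor_itv (x * N%:R).
  split; first by rewrite floor_ge0 mulr_ge0.
  - apply: intr_addr1_le_natr (le_lt_trans kx _) _; last exact: lexx.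
    by rewrite -[ltRHS]mul1r ltr_pM2r ?ltr0n.
  - by rewrite kx ltW // -intrD1.
exists (N.-1)%:Z; have -> : x = 1 by apply/le_anti; rewrite x1 xge.
have e : ((N.-1)%:Z)%:~R + 1 = N%:R :> R by rewrite pmulrn natr1 prednK.
by rewrite mul1r e lexx andbT -e lerDl.
Qed.

Lemma affine_lipschitz g (a b u0 u1 c : R) : u0 < u1 ->
  (forall t, u0 <= t <= u1 -> g t = a + b * t) -> `|g u0| <= c -> `|g u1| <= c ->
  forall u v, u0 <= u <= u1 -> u0 <= v <= u1 ->
  `|g u - g v| * (u1 - u0) <= 2 * c * `|u - v|.
Proof.
move=> u01 gab g0 g1 u v uu vv.
have dist x y : u0 <= x <= u1 -> u0 <= y <= u1 -> `|g x - g y| = `|b| * `|x - y|.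
  by move=> xx yy; rewrite !gab // -normrM; congr `|_|; ring.
have slope : `|b| * (u1 - u0) <= 2 * c.
  have end0 : u0 <= u0 <= u1 by rewrite lexx ltW.
  have end1 : u0 <= u1 <= u1 by rewrite lexx ltW.
  rewrite -[u1 - u0]gtr0_norm ?subr_gt0 // -dist //.
  by apply: le_trans (ler_normB _ _) _; lra.
by rewrite dist // mulrAC ler_wpM2r.
Qed.

Lemma grid_affine_lipschitz g N c k u v : (0 < N)%N -> grid_affine N%:R g ->
  (forall t, 0 <= t <= 1 -> `|g t| <= c) -> (0 <= k)%R -> k%:~R + 1 <= N%:R :> R ->
  k%:~R <= u * N%:R <= k%:~R + 1 -> k%:~R <= v * N%:R <= k%:~R + 1 ->
  `|g u - g v| <= 2 * c * N%:R * `|u - v|.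
Proof.
move=> N0 gN gc k0 kN uk vk; have N0' : 0 < N%:R :> R by rewrite ltr0n.
have [a [b gab]] := gN k.
have cellE (x : R) : (k%:~R <= x * N%:R <= k%:~R + 1) =
    (k%:~R / N%:R <= x <= (k%:~R + 1) / N%:R).
  by rewrite ler_pdivrMr // ler_pdivlMr.
have k0' : 0 <= k%:~R :> R by rewrite ler0z.
have in01 (x : R) : k%:~R <= x * N%:R <= k%:~R + 1 -> 0 <= x <= 1.
  move=> /andP[kx xk]; apply/andP; split.
  - by rewrite -(pmulr_lge0 _ N0'); lra.
  - by rewrite -(ler_pM2r N0') mul1r; lra.
have end0 : k%:~R <= (k%:~R / N%:R * N%:R : R) <= k%:~R + 1.
  by rewrite divfK ?gt_eqF //; apply/andP; split; lra.
have end1 : k%:~R <= ((k%:~R + 1) / N%:R * N%:R : R) <= k%:~R + 1.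
  by rewrite divfK ?gt_eqF //; apply/andP; split; lra.
have gab' t : k%:~R / N%:R <= t <= (k%:~R + 1) / N%:R -> g t = a + b * t.
  by rewrite -cellE; exact: gab.
have u01 : k%:~R / N%:R < (k%:~R + 1) / N%:R :> R by rewrite ltr_pM2r ?invr_gt0 // ltrDl.
rewrite cellE in uk; rewrite cellE in vk.
have := affine_lipschitz u01 gab' (gc _ (in01 _ end0)) (gc _ (in01 _ end1)) uk vk.
rewrite mulrDl addrAC subrr add0r mul1r => h.
by rewrite mulrAC -ler_pdivrMr.
Qed.

Lemma grid_affine_lipschitz_near g N c s t : (0 < N)%N -> grid_affine N%:R g ->
  (forall t, 0 <= t <= 1 -> `|g t| <= c) -> 0 <= s -> s < t -> t <= 1 ->
  N%:R * (t - s) <= 1 -> `|g s - g t| <= 2 * c * N%:R * (t - s).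
Proof.
move=> N0 gN gc s0 st t1 near; have N0' : 0 < N%:R :> R by rewrite ltr0n.
have lip := grid_affine_lipschitz N0 gN gc.
have sN : s * N%:R < t * N%:R by rewrite ltr_pM2r.
have tN : t * N%:R <= N%:R by rewrite -[leRHS]mul1r ler_pM2r.
have tsN : t * N%:R <= s * N%:R + 1 by move: near; rewrite mulrBr ![N%:R * _]mulrC; lra.
have s01 : 0 <= s <= 1 by apply/andP; split; lra.
have [k [k0 kN sk]] := grid_cell_of N0 s01.
have ts : `|s - t| = t - s by rewrite distrC gtr0_norm // subr_gt0.
have [tk|kt] := lerP (t * N%:R) (k%:~R + 1).
  by rewrite -ts; apply: (lip k) => //; move: sk => /andP[? ?]; rewrite tk andbT; lra.
(* [t] lies in the next cell: split at the common endpoint [p] *)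
pose p : R := (k%:~R + 1) / N%:R.
have pN : p * N%:R = k%:~R + 1 by rewrite divfK ?gt_eqF.
have k1N : (k + 1)%:~R + 1 <= N%:R :> R.
  by apply: (intr_addr1_le_natr (x := t * N%:R)) => //; rewrite intrD1.
have pk : k%:~R <= p * N%:R <= k%:~R + 1 by rewrite pN lexx lerDl ler01.
have pk1 : (k + 1)%:~R <= p * N%:R <= (k + 1)%:~R + 1 by rewrite pN intrD1 lexx lerDl ler01.
have tk1 : (k + 1)%:~R <= t * N%:R <= (k + 1)%:~R + 1.
  by rewrite intrD1; move: sk => /andP[? ?]; apply/andP; split; lra.
have h1 := lip k s p k0 kN sk pk.
have h2 := lip (k + 1)%R p t (addr_ge0 k0 ler01) k1N pk1 tk1.
have ps : s <= p by rewrite -(ler_pM2r N0') pN; case/andP: sk.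
have pt : p <= t by rewrite -(ler_pM2r N0') pN ltW.
have sp : `|s - p| = p - s by rewrite distrC ger0_norm // subr_ge0.
have pt' : `|p - t| = t - p by rewrite distrC ger0_norm // subr_ge0.
rewrite sp in h1; rewrite pt' in h2.
rewrite (_ : g s - g t = (g s - g p) + (g p - g t)); last by ring.
apply: le_trans (ler_normD _ _) _; apply: le_trans (lerD h1 h2) _.
by rewrite -mulrDr addrC addrA subrK.
Qed.

Lemma grid_affine_holder g N c alpha s t : (0 < N)%N -> 0 <= alpha <= 1 ->
  grid_affine N%:R g -> (forall t, 0 <= t <= 1 -> `|g t| <= c) ->
  0 <= s -> s < t -> t <= 1 -> `|g s - g t| <= 2 * c * (N%:R * (t - s)) `^ alpha.
Proof.
move=> N0 /andP[a0 a1] gN gc s0 st t1.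
have c0 : 0 <= c by apply: le_trans (gc 0 _); rewrite ?lexx ?ler01.
have x0 : 0 < N%:R * (t - s) by rewrite mulr_gt0 ?ltr0n ?subr_gt0.
have [x1|x1] := lerP 1 (N%:R * (t - s)).
  apply: (@le_trans _ _ (2 * c)).
    by apply: le_trans (ler_normB _ _) _; have := gc s; have := gc t; lra.
  rewrite -[leLHS]mulr1 ler_wpM2l ?mulr_ge0 //.
  by rewrite -[leLHS](powRr0 (N%:R * (t - s))) ler_powR.
apply: le_trans (grid_affine_lipschitz_near N0 gN gc s0 st t1 (ltW x1)) _.
by rewrite -mulrA ler_wpM2l ?mulr_ge0 // ger1_powR // x0 ltW.
Qed.

End grid_holder.

Lemma dyadic_increment_holder (R : realType) (f : R -> R) m (c alpha s t : R) :
  0 <= alpha <= 1 ->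
  (forall t, 0 <= t <= 1 -> `|dyadic_interp f m.+1 t - dyadic_interp f m t| <= c) ->
  0 <= s -> s < t -> t <= 1 ->
  `|(dyadic_interp f m.+1 s - dyadic_interp f m s) -
    (dyadic_interp f m.+1 t - dyadic_interp f m t)|
    <= 2 * c * (2 ^+ m.+1 * (t - s)) `^ alpha.
Proof.
move=> a01 gc s0 st t1; rewrite -natrX.
apply: (grid_affine_holder (g := dyadic_interp f m.+1 \- dyadic_interp f m)) => //.
  exact: expn_gt0.
by rewrite natrX; exact: grid_affine_dyadic_increment.
Qed.

Section dyadic_convergence.
Variable R : realType.
Implicit Types (f : R -> R) (x e : R).

Lemma dyadic_interp_near f n x e : 0 <= x <= 1 ->
  (forall z, 0 <= z <= 1 -> `|x - z| <= 2 ^- n -> `|f z - f x| <= e) ->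
  `|dyadic_interp f n x - f x| <= e.
Proof.
move=> x01 fe; have E0 : 0 < (2 : R) ^+ n by exact: exprn_gt0.
have [k [k0 kN xk]] := grid_cell_of (expn_gt0 2 n) x01.
rewrite natrX in kN xk; rewrite (dyadic_interp_cell f xk).
have k0' : 0 <= k%:~R :> R by rewrite ler0z.
move: xk => /andP[kx xk]; set l := x * 2 ^+ n - k%:~R.
have l0 : 0 <= l by rewrite subr_ge0.
have l1 : 0 <= 1 - l by rewrite /l; lra.
have left : `|f (k%:~R / 2 ^+ n) - f x| <= e.
  apply: fe.
    by rewrite divr_ge0 ?(ltW E0) //= ler_pdivrMr // mul1r; lra.
  have -> : x - k%:~R / 2 ^+ n = l / 2 ^+ n by rewrite /l; field; rewrite gt_eqF.
  rewrite normrM ger0_norm // gtr0_norm ?invr_gt0 //.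
  by apply: ler_piMl; [rewrite invr_ge0 ltW | lra].
have right : `|f ((k%:~R + 1) / 2 ^+ n) - f x| <= e.
  apply: fe.
    by rewrite divr_ge0 ?(ltW E0) ?addr_ge0 //= ler_pdivrMr // mul1r; lra.
  have -> : x - (k%:~R + 1) / 2 ^+ n = - ((1 - l) / 2 ^+ n).
    by rewrite /l; field; rewrite gt_eqF.
  rewrite normrN normrM ger0_norm // gtr0_norm ?invr_gt0 //.
  by apply: ler_piMl; [rewrite invr_ge0 ltW | lra].
(* a convex combination of two values within [e] of [f x] *)
rewrite (_ : _ - f x = (1 - l) * (f (k%:~R / 2 ^+ n) - f x) +
                       l * (f ((k%:~R + 1) / 2 ^+ n) - f x)); last by rewrite /l; ring.
apply: le_trans (ler_normD _ _) _; rewrite !normrM (ger0_norm l0) (ger0_norm l1).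
rewrite [leRHS](_ : e = (1 - l) * e + l * e); last by ring.
by apply: lerD; apply: ler_wpM2l.
Qed.

Lemma dyadic_interp_cvg f x : {within `[0, 1], continuous f} -> 0 <= x <= 1 ->
  dyadic_interp f n x @[n --> \oo] --> f x.
Proof.
move=> fc x01; apply/cvgrPdist_le => e e0.
have x01' : `[0, 1]%classic x by rewrite /= in_itv.
have [d d0 fd] : exists2 d : R, 0 < d &
    forall z, 0 <= z <= 1 -> `|x - z| < d -> `|f x - f z| <= e.
  move/subspace_continuousP: fc => /(_ x x01') /cvgr_dist_le /(_ e e0).
  rewrite /prop_near1 /within /= => /nbhs_ballP [d d0 fd].
  by exists d => // z z01 xz; apply: fd => //; rewrite /= in_itv.
have : (2 ^-1 : R) ^+ n @[n --> \oo] --> 0.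
  by apply: cvg_expr; rewrite gtr0_norm ?invf_lt1 ?ltr1n.
move=> /cvgrPdist_lt /(_ d d0); apply: filterS => n.
rewrite sub0r normrN exprVn ger0_norm ?invr_ge0 ?exprn_ge0 // => nd.
rewrite distrC; apply: dyadic_interp_near => // z z01 xz.
by rewrite distrC; apply: fd => //; apply: le_lt_trans xz nd.
Qed.

End dyadic_convergence.

Lemma geometric_tail_le (R : realFieldType) (q : R) n M : 0 <= q < 1 -> (n <= M)%N ->
  \sum_(n <= i < M) q ^+ i.+1 <= q ^+ n.+1 / (1 - q).
Proof.
move=> /andP[q0 q1] nM; have q1' : 0 < 1 - q by rewrite subr_gt0.
rewrite ler_pdivlMr // mulrC mulr_sumr.
rewrite (telescope_sumr_eq (fun i => - q ^+ i.+1) _ nM); last first.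
  by move=> i _; rewrite !exprS; ring.
by have := exprn_ge0 M.+1 q0; lra.
Qed.

Lemma lim_dist_le_geometric_tail (R : realType) (u : R^nat) (l K q : R) n :
  0 <= K -> 0 <= q < 1 -> u @ \oo --> l ->
  (forall m, (n < m)%N -> `|u m - u m.-1| <= K * q ^+ m) ->
  `|l - u n| <= K * (q ^+ n.+1 / (1 - q)).
Proof.
move=> K0 q01 ul du.
have dist_cvg : `|u M - u n| @[M --> \oo] --> `|l - u n|.
  exact: (cvg_norm (cvgB ul (cvg_cst (u n)))).
apply: (cvgr_to_le dist_cvg).
near=> M; have nM : (n <= M)%N by near: M; exists n.
rewrite -(telescope_sumr u nM); apply: le_trans (ler_norm_sum _ _ _) _.
apply: le_trans (ler_wpM2l K0 (geometric_tail_le q01 nM)); rewrite mulr_sumr.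
by apply: ler_sum_nat => i /andP[ni _]; exact: du.
Unshelve. all: end_near.
Qed.

Lemma exprn_powR (R : realType) (b a : R) m : 0 <= b -> (b ^+ m) `^ a = (b `^ a) ^+ m.
Proof.
by move=> b0; rewrite -powR_mulrn // -powRrM mulrC powRrM powR_mulrn ?powR_ge0.
Qed.

Lemma dyadic_tail_holder (R : realType) (f : R -> R) n (alpha rho theta : R) :
  {within `[0, 1], continuous f} -> 0 <= alpha <= 1 -> 0 <= rho -> 0 <= theta ->
  theta * 2 `^ alpha < 1 ->
  (forall m, (n < m)%N -> forall t, 0 <= t <= 1 ->
     `|dyadic_interp f m t - dyadic_interp f m.-1 t| <= rho * theta ^+ m) ->
  forall s t, 0 <= s -> s < t -> t <= 1 ->
  `|(f s - dyadic_interp f n s) - (f t - dyadic_interp f n t)| <=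
    2 * rho * (t - s) `^ alpha *
    ((theta * 2 `^ alpha) ^+ n.+1 / (1 - theta * 2 `^ alpha)).
Proof.
move=> fc a01 rho0 theta0 q1 incr s t s0 st t1.
have q01 : 0 <= theta * 2 `^ alpha < 1 by rewrite q1 mulr_ge0 ?powR_ge0.
have s01 : 0 <= s <= 1 by apply/andP; split; lra.
have t01 : 0 <= t <= 1 by apply/andP; split; lra.
have u_cvg : dyadic_interp f M s - dyadic_interp f M t @[M --> \oo] --> f s - f t.
  exact: cvgB (dyadic_interp_cvg fc s01) (dyadic_interp_cvg fc t01).
rewrite (_ : _ - _ = (f s - f t) - (dyadic_interp f n s - dyadic_interp f n t)); last by ring.
apply: (lim_dist_le_geometric_tail _ q01 u_cvg); first by rewrite !mulr_ge0 ?powR_ge0.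
case=> // m nm /=.
rewrite (_ : _ - _ = (dyadic_interp f m.+1 s - dyadic_interp f m s) -
                     (dyadic_interp f m.+1 t - dyadic_interp f m t)); last by ring.
apply: le_trans (dyadic_increment_holder a01 (incr _ nm) s0 st t1) _.
rewrite powRM ?exprn_ge0 ?subr_ge0 ?(ltW st) // exprn_powR // exprMn.
rewrite [leRHS](_ : _ = 2 * (rho * theta ^+ m.+1) *
                        (2 `^ alpha ^+ m.+1 * (t - s) `^ alpha)) //; ring.
Qed.

Lemma normr_le_supnorm (R : realType) (u : R -> R) t :
  0 <= t <= 1 -> (`|u t|%:E <= supnorm u)%E.
Proof. by move=> t01; apply: ereal_sup_ubound; exists t. Qed.

Lemma holder_norm_le (R : realType) (alpha K : R) (u : R -> R) :
  (forall s t, 0 <= s -> s < t -> t <= 1 -> `|u s - u t| <= K * (t - s) `^ alpha) ->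
  (holder_norm alpha u <= K%:E)%E.
Proof.
move=> hu; apply/ereal_supP => _ [s [t [s0 st t1 ->]]].
have ts : `|s - t| = t - s by rewrite distrC gtr0_norm // subr_gt0.
rewrite lee_fin ts ler_pdivrMr ?powR_gt0 ?subr_gt0 //.
exact: hu.
Qed.

Lemma powR_lt1 (R : realType) (b x : R) : 1 < b -> x < 0 -> b `^ x < 1.
Proof.
move=> b1 x0; rewrite /powR gt_eqF ?(lt_trans ltr01) //.
by rewrite expR_lt1 pmulr_llt0 // ln_gt0.
Qed.

Theorem theorem4 (R : realType) (d : measure_display) (T : measurableType d)
  (P : probability T R) (H : R) (B : R -> T -> R) (alpha delta rho : R) :
  1 / 2 < H < 1 ->
  is_fBM P H B ->
  1 / 2 < alpha < H ->
  0 < delta < H - alpha ->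
  0 < rho ->
  forall (w : T) (n : nat),
    (* n > N := sup { m >= 1 : ||B_m - B_{m-1}||_oo >= rho 2^{-(H-delta) m} } *)
    (forall m : nat, (1 <= m)%N ->
       ((rho * 2 `^ (- (H - delta) * m%:R))%:E <=
          supnorm (fun t => (dyadic_interp (B ^~ w) m t
                            - dyadic_interp (B ^~ w) m.-1 t)%R))%E ->
       (m < n)%N) ->
    (holder_norm alpha (fun t => (B t w - dyadic_interp (B ^~ w) n t)%R) <=
      (rho * 2 `^ (2 - alpha) * 2 `^ (- (H - alpha - delta) * n.+1%:R)
        / (1 - 2 `^ (- (H - alpha - delta))))%:E)%E.
Proof.
move=> /andP[H12 H1] [_ _ Bc _] /andP[a12 aH] /andP[d0 dHa] rho0 w n hN.
have a01 : 0 <= alpha <= 1 by apply/andP; split; lra.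
set theta := 2 `^ (- (H - delta)); set q := 2 `^ (- (H - alpha - delta)).
have powRn (x : R) m : 2 `^ (x * m%:R) = (2 `^ x) ^+ m.
  by rewrite powRrM powR_mulrn ?powR_ge0.
have q_eq : theta * 2 `^ alpha = q.
  by rewrite -powRD ?pnatr_eq0 ?implybT //; congr (_ `^ _); ring.
have q0 : 0 <= q := powR_ge0 _ _.
have q1 : q < 1 by rewrite powR_lt1 ?ltr1n //; lra.
have increments m : (n < m)%N -> forall t, 0 <= t <= 1 ->
    `|dyadic_interp (B ^~ w) m t - dyadic_interp (B ^~ w) m.-1 t| <= rho * theta ^+ m.
  move=> nm t t01; rewrite -powRn -lee_fin; apply/ltW.
  pose g t := dyadic_interp (B ^~ w) m t - dyadic_interp (B ^~ w) m.-1 t.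
  apply: le_lt_trans (normr_le_supnorm g t01) _; rewrite ltNge.
  by apply/negP => /(hN m (leq_ltn_trans (leq0n n) nm)); rewrite ltnNge ltnW.
apply: holder_norm_le => s t s0 st t1.
have tail := dyadic_tail_holder (Bc w) a01 (ltW rho0) (powR_ge0 _ _) _ increments s0 st t1.
rewrite q_eq in tail; apply: le_trans (tail q1) _.
have two : 2 <= 2 `^ (2 - alpha) :> R by apply: le1r_powR; rewrite ?ler1n //; lra.
rewrite powRn [leRHS](_ : _ = 2 `^ (2 - alpha) * rho * (t - s) `^ alpha *
                               (q ^+ n.+1 / (1 - q))); last by ring.
apply: ler_wpM2r; first by rewrite divr_ge0 ?exprn_ge0 // subr_ge0 ltW.
apply: ler_wpM2r; first exact: powR_ge0.
by apply: ler_wpM2r; first exact: ltW.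
Qed.
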